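(* Let $q\in\mathrm{prob}(\{0,1\}^2)$. The set $B:=\{(\pi_1,\chi^{(1)}_{1|1},\chi^{(2)}_{1|1}):(\pi,\chi)\in\Theta_2,\ \mu(\pi,\chi)=q\}$ is nonempty and equals the set of all $(\mathrm{Pr},\mathrm{Se}_1,\mathrm{Se}_2)\in[0,1]^3$ satisfying $-q_{10}\le\mathrm{Pr}(\mathrm{Se}_2-\mathrm{Se}_1)\le q_{01}$, $-q_{00}\le\mathrm{Pr}(\mathrm{Se}_1+\mathrm{Se}_2-1)\le q_{11}$, $\mathrm{Pr}-q_{0+}\le\mathrm{Pr}\,\mathrm{Se}_1\le q_{1+}$, and $\mathrm{Pr}-q_{+0}\le\mathrm{Pr}\,\mathrm{Se}_2\le q_{+1}$.
   Context: A subscript $+$ denotes summation over the replaced index, e.g. $q_{0+}=q_{00}+q_{01}$, $q_{+0}=q_{00}+q_{10}$. $\mathrm{prob}(\mathcal{X})$ is the set of probability densities on a finite set $\mathcal{X}$; $\mathrm{markov}(\mathcal{X},\mathcal{Y})$ the set of maps $(x,y)\mapsto p_{y|x}$ with $p_{\cdot|x}\in\mathrm{prob}(\mathcal{Y})$. $\Theta_2:=\mathrm{prob}(\{0,1\})\times\mathrm{markov}(\{0,1\},\{0,1\}^2)$, $\mu(\pi,\chi)_j:=\sum_{i=0}^1\pi_i\chi_{j|i}$ for $j\in\{0,1\}^2$, $\chi^{(1)}_{\iota|i}:=\chi_{\iota0|i}+\chi_{\iota1|i}$, $\chi^{(2)}_{\iota|i}:=\chi_{0\iota|i}+\chi_{1\iota|i}$.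 *)

From mathcomp Require Import all_boot all_order all_algebra.
Set Implicit Arguments. Unset Strict Implicit. Unset Printing Implicit Defensive.
Import Order.TTheory GRing.Theory Num.Theory.
Local Open Scope ring_scope.

Definition is_prob (R : numDomainType) (X : finType) (p : X -> R) : Prop :=
  (forall x, 0 <= p x) /\ \sum_(x : X) p x = 1.

Definition is_markov (R : numDomainType) (X Y : finType) (chi : X -> Y -> R) : Prop :=
  forall x, is_prob (chi x).

(* {0,1} is bool (false = 0, true = 1); {0,1}^2 is bool * bool. *)
Definition in_Theta2 (R : numDomainType) (pi : bool -> R) (chi : bool -> bool * bool -> R) : Prop :=
  is_prob pi /\ is_markov chi.

Definition mu (R : numDomainType) (pi : bool -> R) (chi : bool -> bool * bool -> R)
  (j : bool * bool) : R :=
  \sum_(i : bool) pi i * chi i j.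

Definition chi1 (R : numDomainType) (chi : bool -> bool * bool -> R) (iota i : bool) : R :=
  chi i (iota, false) + chi i (iota, true).

Definition chi2 (R : numDomainType) (chi : bool -> bool * bool -> R) (iota i : bool) : R :=
  chi i (false, iota) + chi i (true, iota).

Definition setB (R : numDomainType) (q : bool * bool -> R) (t : R * R * R) : Prop :=
  exists pi chi, in_Theta2 pi chi /\ (forall j, mu pi chi j = q j) /\
    t = (pi true, chi1 chi true true, chi2 chi true true).

Definition in_box (R : numDomainType) (q : bool * bool -> R) (t : R * R * R) : Prop :=
  let: (Pr, Se1, Se2) := t in
  let q00 := q (false, false) in let q01 := q (false, true) in
  let q10 := q (true, false) in let q11 := q (true, true) in
  (0 <= Pr <= 1) /\ (0 <= Se1 <= 1) /\ (0 <= Se2 <= 1) /\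
  (- q10 <= Pr * (Se2 - Se1) <= q01) /\
  (- q00 <= Pr * (Se1 + Se2 - 1) <= q11) /\
  (Pr - (q00 + q01) <= Pr * Se1 <= q10 + q11) /\
  (Pr - (q00 + q10) <= Pr * Se2 <= q01 + q11).

From mathcomp Require Import all_boot all_order all_algebra.
From mathcomp Require Import ring lra.
Set Implicit Arguments.
Unset Strict Implicit.
Unset Printing Implicit Defensive.
Import Order.TTheory GRing.Theory Num.Theory.
Local Open Scope ring_scope.

(* Write q = Pr * a + (1 - Pr) * b, where a and b are the joint laws of the
   two test results given the two states.  A law a with Pr * a <= q can be
   completed to such a mixture, and a law on {0,1}^2 with marginals Se1, Se2
   is determined by its mass T at (1,1), which ranges over
   [max(0, Se1 + Se2 - 1), min(Se1, Se2)].  So Pr, Se1, Se2 are attained iff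
   one number T satisfies four lower and four upper bounds, and after scaling
   by Pr the pairwise comparisons of these bounds are the inequalities of the
   statement. *)

Lemma sum_pair_bool (V : nmodType) (F : bool * bool -> V) :
  \sum_(j : bool * bool) F j =
  F (false, false) + F (false, true) + F (true, false) + F (true, true).
Proof.
rewrite (eq_bigr (fun j => F (j.1, j.2))); last by case.
by rewrite -(pair_big xpredT xpredT (fun i k => F (i, k))) /= !big_bool /= addrC
  (addrC (F (false, true))) (addrC (F (true, true))) !addrA.
Qed.

Section Mixtures.
Variables (R : realFieldType) (X : finType).

Lemma mixture_decomposition (q a : X -> R) (P : R) :
  is_prob q -> is_prob a -> 0 <= P <= 1 ->
  (exists b, is_prob b /\ forall x, P * a x + (1 - P) * b x = q x) <->
  (forall x, P * a x <= q x).
Proof.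
move=> [q_ge0 q_sum] [a_ge0 a_sum] /andP[P_ge0 P_le1]; split.
  move=> [b [[b_ge0 _] mix]] x; rewrite -mix lerDl.
  by rewrite mulr_ge0 ?subr_ge0.
move=> Pa_le_q; have [P1|P_neq1] := eqVneq P 1.
  rewrite P1 in Pa_le_q *.
  have a_eq_q x : a x = q x.
    have sum_diff0 : \sum_x (q x - a x) = 0 by rewrite sumrB q_sum a_sum subrr.
    have diff_ge0 y : true -> 0 <= q y - a y.
      by rewrite subr_ge0 -[a y]mul1r => _; apply: Pa_le_q.
    have /eqP := psumr_eq0P diff_ge0 sum_diff0 (i := x) isT.
    by rewrite subr_eq0 eq_sym => /eqP.
  by exists q; split=> [|x]; [split | rewrite subrr mul0r addr0 mul1r a_eq_q].
have nP_gt0 : 0 < 1 - P by rewrite subr_gt0 lt_neqAle P_neq1.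
exists (fun x => (q x - P * a x) / (1 - P)); split; last first.
  by move=> x; rewrite [(1 - P) * _]mulrC divfK ?gt_eqF // addrC subrK.
split=> [x|]; first by rewrite /= divr_ge0 ?subr_ge0 ?Pa_le_q.
rewrite /= -mulr_suml sumrB -mulr_sumr q_sum a_sum mulr1 divff //.
by rewrite gt_eqF.
Qed.

End Mixtures.

Lemma scaled_between (R : realFieldType) (P L U l u : R) :
  0 <= P -> L <= U -> l <= u -> l <= P * U -> P * L <= u ->
  exists2 T, L <= T <= U & l <= P * T <= u.
Proof.
move=> P_ge0 LU lu lPU PLu; have [P0|P_neq0] := eqVneq P 0.
  move: lPU PLu; rewrite P0 !mul0r => l_le0 u_ge0.
  by exists L; rewrite ?lexx ?LU ?mul0r ?l_le0 ?u_ge0.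
have P_gt0 : 0 < P by rewrite lt_neqAle eq_sym P_neq0.
(* P * T is the least admissible value max (P * L) l. *)
exists (Num.max (P * L) l / P).
  rewrite ler_pdivlMr // ler_pdivrMr // ![_ * P]mulrC le_max lexx ge_max.
  by rewrite ler_wpM2l.
by rewrite mulrC divfK ?gt_eqF // le_max lexx orbT ge_max PLu.
Qed.

Section TwoTests.
Variable R : realFieldType.

Definition bool_coupling (S1 S2 T : R) (j : bool * bool) : R :=
  match j with
  | (true, true) => T
  | (true, false) => S1 - T
  | (false, true) => S2 - T
  | (false, false) => 1 - S1 - S2 + T
  end.

Lemma sum_bool_coupling (S1 S2 T : R) : \sum_j bool_coupling S1 S2 T j = 1.
Proof. by rewrite sum_pair_bool /=; ring. Qed.

Lemma bool_couplingE (a : bool * bool -> R) : \sum_j a j = 1 ->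
  a =1 bool_coupling (a (true, false) + a (true, true))
                     (a (false, true) + a (true, true)) (a (true, true)).
Proof. by rewrite sum_pair_bool => a_sum [[] []] /=; lra. Qed.

Definition coupling_feasible (q : bool * bool -> R) (P S1 S2 : R) : Prop :=
  0 <= P <= 1 /\ exists T, forall j,
    0 <= bool_coupling S1 S2 T j /\ P * bool_coupling S1 S2 T j <= q j.

Lemma setB_coupling (q : bool * bool -> R) (P S1 S2 : R) : is_prob q ->
  setB q (P, S1, S2) <-> coupling_feasible q P S1 S2.
Proof.
move=> q_prob; split.
  move=> [pi [chi [[[pi_ge0 pi_sum] chi_prob] [mu_q [-> -> ->]]]]].
  rewrite big_bool /= in pi_sum.
  have pi0 : pi false = 1 - pi true by rewrite -pi_sum addrAC subrr add0r.
  have [a_ge0 a_sum] := chi_prob true.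
  have P01 : 0 <= pi true <= 1 by rewrite pi_ge0 -pi_sum lerDl pi_ge0.
  split=> //; exists (chi true (true, true)) => j.
  rewrite /chi1 /chi2 -(bool_couplingE a_sum) a_ge0; split=> //.
  apply: (mixture_decomposition q_prob (chi_prob true) P01).1 j.
  exists (chi false); split=> [|x]; first exact: chi_prob.
  by rewrite -pi0 -mu_q /mu big_bool.
move=> [P01 [T cT]]; set c := bool_coupling S1 S2 T in cT *.
have c_prob : is_prob c by split=> [j|]; [case: (cT j) | exact: sum_bool_coupling].
have [|b [b_prob mix]] := (mixture_decomposition q_prob c_prob P01).2.
  by move=> j; case: (cT j).
exists (fun i => if i then P else 1 - P), (fun i => if i then c else b).
split; [split; [split|] | split].
- by case; rewrite ?subr_ge0; case/andP: P01.
- by rewrite big_bool /= addrC subrK.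
- by case.
- by move=> j; rewrite /mu big_bool; apply: mix.
- by congr (_, _, _); rewrite /chi1 /chi2 /= subrK.
Qed.

Lemma in_box_coupling (q : bool * bool -> R) (P S1 S2 : R) :
  (forall j, 0 <= q j) ->
  in_box q (P, S1, S2) <-> coupling_feasible q P S1 S2.
Proof.
move=> q_ge0; split; last first.
  move=> [/andP[P_ge0 P_le1] [T cT]].
  have Pc_ge0 j : 0 <= P * bool_coupling S1 S2 T j by rewrite mulr_ge0 ?(cT j).1.
  have := (cT (false, false), cT (false, true), cT (true, false), cT (true, true)).
  have := (Pc_ge0 (false, false), Pc_ge0 (false, true), Pc_ge0 (true, false),
    Pc_ge0 (true, true)) => /=.
  move=> [[[n00 n01] n10] n11] [[[[c00 m00] [c01 m01]] [c10 m10]] [c11 m11]].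
  by rewrite /in_box P_ge0 P_le1; repeat split; try (apply/andP; split); lra.
move=> [/andP[P_ge0 P_le1] [/andP[S1_ge0 S1_le1] [/andP[S2_ge0 S2_le1]
  [/andP[diff_lo diff_hi] [/andP[sum_lo sum_hi] [/andP[PS1_lo PS1_hi]
  /andP[PS2_lo PS2_hi]]]]]]].
have := (q_ge0 (false, false), q_ge0 (false, true),
  q_ge0 (true, false), q_ge0 (true, true)) => -[[[q00 q01] q10] q11].
have [T LTU lPTu] : exists2 T,
    Num.max 0 (S1 + S2 - 1) <= T <= Num.min S1 S2 &
    Num.max (P * S1 - q (true, false)) (P * S2 - q (false, true)) <= P * T <=
    Num.min (q (true, true)) (q (false, false) - P + P * S1 + P * S2).
  apply: scaled_between; rewrite ?maxr_pMr ?minr_pMr // !(ge_max, le_min) ?mulr0;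
  by repeat (apply/andP; split); lra.
move: LTU lPTu; rewrite !(ge_max, le_min).
move=> /and3P[/andP[T_ge0 T_ge] T_le1 T_le2] /and3P[/andP[PT_ge1 PT_ge2] PT_le1 PT_le2].
split; first by rewrite P_ge0.
by exists T => -[[] []] /=; split; lra.
Qed.

End TwoTests.

Theorem lemma4 (R : realFieldType) (q : bool * bool -> R) (hq : is_prob q) :
  (exists t, setB q t) /\ (forall t : R * R * R, setB q t <-> in_box q t).
Proof.
have [q_ge0 _] := hq.
split=> [|[[P S1] S2]]; last by rewrite setB_coupling // in_box_coupling.
exists (0, 0, 0); apply/setB_coupling => //; split; first by rewrite lexx ler01.
by exists 0 => j; rewrite mul0r; split; [case: j => [[] []] /=; lra | exact: q_ge0].
Qed.
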